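(* Let $L:\mathcal{B}\to\mathcal{A}$ be left adjoint to $R:\mathcal{A}\to\mathcal{B}$ with unit $\eta$ and counit $\epsilon$. If $R$ is separable, then $(L,\epsilon L)$ is relatively projective as a right module functor on the monad $(RL,R\epsilon L,\eta)$.
   Context: For a right adjoint $R$, $R$ is separable iff there is a natural transformation $\sigma:\mathrm{Id}_{\mathcal{A}}\to LR$ with $\epsilon\circ\sigma=\mathrm{Id}$ (i.e. the counit is a split natural epimorphism). Given a monad $(Q,m,u)$ on $\mathcal{B}$, a right module functor on it is a pair $(W,\mu)$ with $W:\mathcal{B}\to\mathcal{A}$ a functor and $\mu:WQ\to W$ natural with $\mu\circ\mu Q=\mu\circ Wm$ and $\mu\circ Wu=\mathrm{Id}_W$. $(W,\mu)$ is relatively projective if there is a natural transformation $\gamma:W\to WQ$ with $\mu\circ\gamma=\mathrm{Id}_W$ and $Wm\circ\gamma Q=\gamma\circ\mu$. The pair $(L,\epsilon L)$ is a right module functor on $(RL,R\epsilon L,\eta)$. *)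

Set Implicit Arguments.
Set Universe Polymorphism.

Record Category := {
  Obj :> Type;
  Hom : Obj -> Obj -> Type;
  idm : forall A, Hom A A;
  comp : forall A B C, Hom B C -> Hom A B -> Hom A C;
  comp_id_l : forall A B (f : Hom A B), comp (idm B) f = f;
  comp_id_r : forall A B (f : Hom A B), comp f (idm A) = f;
  comp_assoc : forall A B C D (h : Hom C D) (g : Hom B C) (f : Hom A B),
      comp h (comp g f) = comp (comp h g) f
}.

Arguments idm {c} A.
Arguments comp {c A B C} _ _.
Notation "g ∘ f" := (comp g f) (at level 40, left associativity).

Record Functor (C D : Category) := {
  fobj :> C -> D;
  fmap : forall A B, Hom C A B -> Hom D (fobj A) (fobj B);
  fmap_id : forall A, fmap A A (idm A) = idm (fobj A);
  fmap_comp : forall A B E (g : Hom C B E) (f : Hom C A B),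
      fmap A E (g ∘ f) = fmap B E g ∘ fmap A B f
}.
Arguments fmap {C D} f {A B} _ : rename.

Definition FComp (C D E : Category) (G : Functor D E) (F : Functor C D)
  : Functor C E.
Proof.
  refine {| fobj := fun A => G (F A);
            fmap := fun A B f => fmap G (fmap F f) |}.
  - intro A. rewrite !fmap_id. reflexivity.
  - intros A B E' g f. rewrite !fmap_comp. reflexivity.
Defined.

Definition natural (C D : Category) (F G : Functor C D)
  (t : forall A, Hom D (F A) (G A)) : Prop :=
  forall A B (f : Hom C A B), fmap G f ∘ t A = t B ∘ fmap F f.

Definition is_adjunction (A B : Category) (L : Functor B A) (R : Functor A B)
  (eta : forall X : B, Hom B X (R (L X)))
  (eps : forall Y : A, Hom A (L (R Y)) Y) : Prop :=
  (forall X Y (f : Hom B X Y), fmap R (fmap L f) ∘ eta X = eta Y ∘ f) /\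
  (forall X Y (g : Hom A X Y), g ∘ eps X = eps Y ∘ fmap L (fmap R g)) /\
  (forall X : B, eps (L X) ∘ fmap L (eta X) = idm (L X)) /\
  (forall Y : A, fmap R (eps Y) ∘ eta (R Y) = idm (R Y)).

(** Separable functor (Nastasescu-Van den Bergh-Van Oystaeyen):
    the natural transformation Hom_C(-,-) -> Hom_D(F-,F-), f |-> F f,
    has a natural left inverse P. *)
Definition separable (C D : Category) (F : Functor C D) : Prop :=
  exists P : forall X Y, Hom D (F X) (F Y) -> Hom C X Y,
    (forall X Y (f : Hom C X Y), P X Y (fmap F f) = f) /\
    (forall X' X Y Y' (a : Hom C X' X) (b : Hom C Y Y') (u : Hom D (F X) (F Y)),
        P X' Y' (fmap F b ∘ u ∘ fmap F a) = b ∘ P X Y u ∘ a).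

Definition right_module_functor (A B : Category) (Q : Functor B B)
  (m : forall X : B, Hom B (Q (Q X)) (Q X)) (u : forall X : B, Hom B X (Q X))
  (W : Functor B A) (mu : forall X : B, Hom A (W (Q X)) (W X)) : Prop :=
  natural (FComp W Q) W mu /\
  (forall X, mu X ∘ mu (Q X) = mu X ∘ fmap W (m X)) /\
  (forall X, mu X ∘ fmap W (u X) = idm (W X)).

Definition relatively_projective (A B : Category) (Q : Functor B B)
  (m : forall X : B, Hom B (Q (Q X)) (Q X)) (u : forall X : B, Hom B X (Q X))
  (W : Functor B A) (mu : forall X : B, Hom A (W (Q X)) (W X)) : Prop :=
  @right_module_functor A B Q m u W mu /\
  exists gamma : forall X : B, Hom A (W X) (W (Q X)),
    natural W (FComp W Q) gamma /\
    (forall X, mu X ∘ gamma X = idm (W X)) /\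
    (forall X, fmap W (m X) ∘ gamma (Q X) = gamma X ∘ mu X).

(** Let L ⊣ R with unit η and counit ε, and suppose R is separable, i.e. the
   action of R on morphisms has a natural left inverse P.  The proof goes in
   three steps.
   - Rafael's criterion (one direction): σ_Y := P (η_{RY}) : Y → LRY is a
     natural section of the counit, because R(ε_Y ∘ σ_Y) = Rε_Y ∘ η_{RY} = id
     and P inverts R; naturality of σ follows from naturality of P and η.
   - For any adjunction, (L, εL) is a right module functor on the monad
     (RL, RεL, η): the axioms are naturality of ε and the triangle identity.
   - Given a natural section σ of ε, γ := σL witnesses relative
     projectivity: μγ = εL ∘ σL = id, and the compatibility
     L(RεL) ∘ σLRL = σL ∘ εL is naturality of σ at the morphism εL. *)


Section SeparableInverse.

Context {C D : Category} {F : Functor C D}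
  {P : forall X Y, Hom D (F X) (F Y) -> Hom C X Y}.
Hypothesis P_natural : forall X' X Y Y' (a : Hom C X' X) (b : Hom C Y Y')
  (u : Hom D (F X) (F Y)), P X' Y' (fmap F b ∘ u ∘ fmap F a) = b ∘ P X Y u ∘ a.

Lemma sep_inverse_precomp X' X Y (a : Hom C X' X) (u : Hom D (F X) (F Y)) :
  P X' Y (u ∘ fmap F a) = P X Y u ∘ a.
Proof.
  transitivity (P X' Y (fmap F (idm Y) ∘ u ∘ fmap F a)).
  - now rewrite fmap_id, comp_id_l.
  - now rewrite P_natural, comp_id_l.
Qed.

Lemma sep_inverse_postcomp X Y Y' (b : Hom C Y Y') (u : Hom D (F X) (F Y)) :
  P X Y' (fmap F b ∘ u) = b ∘ P X Y u.
Proof.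
  transitivity (P X Y' (fmap F b ∘ u ∘ fmap F (idm X))).
  - now rewrite fmap_id, comp_id_r.
  - now rewrite P_natural, comp_id_r.
Qed.

End SeparableInverse.

Definition counit_section {A B : Category} (L : Functor B A) (R : Functor A B)
  (eps : forall Y : A, Hom A (L (R Y)) Y)
  (sigma : forall Y : A, Hom A Y (L (R Y))) : Prop :=
  (forall Y Y' (g : Hom A Y Y'), fmap L (fmap R g) ∘ sigma Y = sigma Y' ∘ g) /\
  (forall Y, eps Y ∘ sigma Y = idm Y).

(** Rafael's criterion, the direction we need: if the right adjoint R is
    separable, then σ_Y := P (η_{RY}) is a natural section of the counit. *)
Lemma separable_right_adjoint_counit_section {A B : Category}
  {L : Functor B A} {R : Functor A B}
  {eta : forall X : B, Hom B X (R (L X))}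
  {eps : forall Y : A, Hom A (L (R Y)) Y} :
  is_adjunction L R eta eps -> separable R ->
  exists sigma, counit_section L R eps sigma.
Proof.
  intros [eta_nat [_ [_ triangle_R]]] [P [P_retract P_natural]].
  exists (fun Y => P Y (L (R Y)) (eta (R Y))). split.
  - (* Both sides are P applied to R(LR g) ∘ η_{RY} = η_{RY'} ∘ R g. *)
    intros Y Y' g.
    rewrite <- (sep_inverse_postcomp P_natural), <- (sep_inverse_precomp P_natural).
    now rewrite eta_nat.
  - (* P (Rε_Y ∘ η_{RY}) = P (id) = id. *)
    intro Y.
    rewrite <- (sep_inverse_postcomp P_natural), triangle_R, <- (fmap_id R).
    apply P_retract.
Qed.

Lemma adjunction_right_module_functor {A B : Category}
  {L : Functor B A} {R : Functor A B}
  {eta : forall X : B, Hom B X (R (L X))}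
  {eps : forall Y : A, Hom A (L (R Y)) Y} :
  is_adjunction L R eta eps ->
  @right_module_functor A B (FComp R L)
    (fun X : B => fmap R (eps (L X))) eta L (fun X : B => eps (L X)).
Proof.
  intros [_ [eps_nat [triangle_L _]]]. split; [|split].
  - intros X Y f. apply eps_nat.
  - intro X. apply eps_nat.
  - intro X. apply triangle_L.
Qed.

(** A natural section σ of the counit makes (L, εL) relatively projective,
    with γ := σL; the compatibility with the multiplication is naturality
    of σ at the morphism εL. *)
Lemma counit_section_relatively_projective {A B : Category}
  {L : Functor B A} {R : Functor A B}
  {eta : forall X : B, Hom B X (R (L X))}
  {eps : forall Y : A, Hom A (L (R Y)) Y}
  {sigma : forall Y : A, Hom A Y (L (R Y))} :
  @right_module_functor A B (FComp R L)
    (fun X : B => fmap R (eps (L X))) eta L (fun X : B => eps (L X)) ->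
  counit_section L R eps sigma ->
  @relatively_projective A B (FComp R L)
    (fun X : B => fmap R (eps (L X))) eta L (fun X : B => eps (L X)).
Proof.
  intros module [sigma_nat sigma_section]. split; [exact module|].
  exists (fun X => sigma (L X)). split; [|split].
  - intros X Y f. apply sigma_nat.
  - intro X. apply sigma_section.
  - intro X. apply sigma_nat.
Qed.

Theorem lemma1p15 (A B : Category) (L : Functor B A) (R : Functor A B)
  (eta : forall X : B, Hom B X (R (L X)))
  (eps : forall Y : A, Hom A (L (R Y)) Y) :
  is_adjunction L R eta eps ->
  separable R ->
  @relatively_projective A B (FComp R L)
    (fun X : B => fmap R (eps (L X))) eta L (fun X : B => eps (L X)).
Proof.
  intros adj sepR.
  destruct (separable_right_adjoint_counit_section adj sepR) as [sigma section].
  exact (counit_section_relatively_projective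
           (adjunction_right_module_functor adj) section).
Qed.
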